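(* Let $X$ be a compact metric space and $F\colon X\to 2^X$ a set-valued mapping. The set of $F$-invariant Borel probability measures whose support is all of $X$ is either empty or a dense $G_\delta$ subset of the space of $F$-invariant Borel probability measures on $X$ (with the weak$^*$ topology).
   Context: $2^X$ is the space of nonempty closed subsets of $X$; a set-valued mapping is an upper semicontinuous $F\colon X\to 2^X$; $F^{-1}(B)=\{y\in X: F(y)\cap B\neq\emptyset\}$ for $B\subset X$. A Borel probability measure $\mu$ on $X$ is $F$-invariant if $\mu(B)\le\mu(F^{-1}(B))$ for every Borel set $B\subset X$. The support of $\mu$ is all of $X$ (full support) if $\mu(U)>0$ for every nonempty open $U\subset X$. *)

From HB Require Import structures.
From mathcomp Require Import all_boot all_order all_algebra.
From mathcomp Require Import all_classical all_reals all_analysis.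
Set Implicit Arguments. Unset Strict Implicit. Unset Printing Implicit Defensive.
Import Order.TTheory GRing.Theory Num.Theory.
Import numFieldNormedType.Exports.
Local Open Scope classical_set_scope.
Local Open Scope ring_scope.

(* Pointed metric spaces (measurable types in MathComp-Analysis must be
   pointed, i.e. nonempty). *)
#[short(type="pmetricType")]
HB.structure Definition PMetric (K : numDomainType) :=
  { M of Pointed M & Metric K M }.

Section Defs.
Context {R : realType} (X : pmetricType R).

Definition borelX : Type := g_sigma_algebraType (@open X).

Definition probX : Type := probability borelX R.

Definition set_valued_mapping (F : X -> set X) : Prop :=
  (forall x, F x !=set0 /\ closed (F x)) /\
  (forall U : set X, open U -> open [set x | F x `<=` U]).

Definition Fpre (F : X -> set X) (B : set X) : set X :=
  [set y | F y `&` B !=set0].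

(* outer measure of an arbitrary set (= value of the completion of mu on
   mu-measurable sets, = mu A on Borel sets A) *)
Definition outer (mu : probX) (A : set X) : \bar R :=
  ereal_inf [set mu C | C in [set C : set borelX | measurable C /\ A `<=` C]].

Definition F_invariant (F : X -> set X) (mu : probX) : Prop :=
  forall B : set borelX, measurable B -> (mu B <= outer mu (Fpre F B))%E.

Definition full_support (mu : probX) : Prop :=
  forall U : set X, open U -> U !=set0 -> (0 < mu U)%E.

Definition weak_open (S : set probX) : Prop :=
  forall mu, S mu -> exists (n : nat) (f : 'I_n -> X -> R) (e : R),
    [/\ 0 < e, (forall i, continuous (f i)) &
      [set nu : probX | forall i, (`| \int[nu]_x (f i x)%:E
                                      - \int[mu]_x (f i x)%:E | < e%:E)%E]
        `<=` S].

(* relative notions inside a subspace M of the space of probability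
   measures (with the subspace weak-* topology) *)
Definition Gdelta_in (M A : set probX) : Prop :=
  exists U : nat -> set probX, (forall n, weak_open (U n)) /\
    A = M `&` \bigcap_n U n.

Definition dense_in (M A : set probX) : Prop :=
  A `<=` M /\
  forall U : set probX, weak_open U -> U `&` M !=set0 -> U `&` A !=set0.

End Defs.

(* A measure has full support iff it charges each ball of a countable base, and
   by compactness each such condition is weak-* open: [mu (ball c r) > 0] iff the
   integral of the continuous bump [max (r - d(c, .)) 0] is positive. So the full
   support measures form a G_delta. Invariance is preserved by convex combinations,
   because [B |-> outer mu (F^-1 B)] is superadditive under mixing, so if some
   invariant [mu0] has full support then every invariant [nu] is the weak-* limit of
   the invariant full support measures [(1 - t) nu + t mu0], t -> 0. Neither step
   uses the upper semicontinuity of [F]. *)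

From HB Require Import structures.
From mathcomp Require Import all_boot all_order all_algebra.
From mathcomp Require Import all_classical all_reals all_analysis.
From mathcomp Require Import measurable_realfun.
From mathcomp Require Import ring lra.

Set Implicit Arguments. Unset Strict Implicit. Unset Printing Implicit Defensive.
Import Order.TTheory GRing.Theory Num.Theory.
Import numFieldNormedType.Exports.
Local Open Scope classical_set_scope.
Local Open Scope ring_scope.

Section positive_integral.
Context {R : realType} d (T : measurableType d) (mu : {measure set T -> \bar R}).
Local Open Scope ereal_scope.

Lemma integral_gt0_measure_gt0 (g : T -> R) :
  measurable_fun [set: T] g -> (forall x, (0 <= g x)%R) ->
  0 < \int[mu]_x (g x)%:E <-> 0 < mu [set x | (0 < g x)%R].
Proof.
move=> mg g0.
have mEg : measurable_fun [set: T] (EFin \o g) by exact/measurable_EFinP.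
have mpos : measurable [set x | (0 < g x)%R].
  have -> : [set x | (0 < g x)%R] = g @^-1` (`]0%R, +oo[ : set R).
    by apply/seteqP; split => x /=; rewrite in_itv /= andbT.
  by rewrite -[X in measurable X]setTI; exact: mg.
have -> : \int[mu]_x (g x)%:E = \int[mu]_x `|(EFin \o g) x|.
  by apply: eq_integral => x _ /=; rewrite ger0_norm.
split => [int_gt0|mu_gt0].
- rewrite lt0e measure_ge0 andbT; apply/negP => /eqP mu0.
  suff int0 : \int[mu]_x `|(EFin \o g) x| = 0 by rewrite int0 ltxx in int_gt0.
  apply/(ae_eq_integral_abs mu measurableT mEg).
  exists [set x | (0 < g x)%R]; split => // x /= /not_implyP [_ gx_neq0].
  by rewrite lt_neqAle g0 andbT eq_sym; apply/eqP => gx0; apply: gx_neq0; rewrite gx0.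
- rewrite lt0e integral_ge0 // andbT; apply/negP => /eqP int0.
  have [N [mN N0 gN]] := (ae_eq_integral_abs mu measurableT mEg).1 int0.
  have : mu [set x | (0 < g x)%R] <= mu N.
    apply: le_measure; rewrite ?inE // => x /= gx; apply: gN => /(_ I) [gx0].
    by rewrite gx0 ltxx in gx.
  by rewrite N0 leNgt mu_gt0.
Qed.

End positive_integral.

Lemma continuous_compact_bounded {R : realType} (T : topologicalType) (f : T -> R) :
  compact [set: T] -> continuous f -> [bounded f x | x in [set: T]].
Proof.
move=> cT cf.
have /(@compact_bounded R R^o) := @continuous_compact T R^o f setT (continuous_subspaceT cf) cT.
rewrite /bounded_near => /= fT_bounded.
near=> M => x _; apply: (near fT_bounded M) => //; exists x.
Unshelve. all: by end_near.
Qed.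

Section borel_integrals.
Context {R : realType} (X : pmetricType R).
Hypothesis compactX : compact [set: X].

Lemma open_measurable_borel (U : set X) : open U -> measurable (U : set (borelX X)).
Proof. by move=> oU; apply: sub_sigma_algebra. Qed.

Lemma continuous_measurable_borel (f : X -> R) :
  continuous f -> measurable_fun [set: borelX X] f.
Proof.
move=> /continuousP cf.
apply: (measurability _ (RGenOpens.measurableE R)).
move=> _ [_ [a [b ->] <-]]; rewrite setTI; apply: open_measurable_borel.
exact/cf/interval_open.
Qed.

Lemma continuous_integrable (mu : probX X) (f : X -> R) :
  continuous f -> mu.-integrable [set: borelX X] (EFin \o f).
Proof.
move=> cf; apply: measurable_bounded_integrable => //.
- by apply: (@le_lt_trans _ _ 1%E); [exact: probability_le1 | exact: ltry].
- exact: continuous_measurable_borel.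
- exact: continuous_compact_bounded.
Qed.

Lemma integral_continuous_fin_num (mu : probX X) (f : X -> R) :
  continuous f -> (\int[mu]_x (f x)%:E)%E \is a fin_num.
Proof.
by move=> cf; exact: (integrable_fin_num measurableT (continuous_integrable mu cf)).
Qed.

Section convex_combination.
Variables (t : R) (t_ge0 : 0 <= t) (t_le1 : t <= 1) (P Q : probX X).

Let one_minus_t : {nonneg R} := NngNum (ltac:(by rewrite subr_ge0) : 0 <= 1 - t).
Let t_nneg : {nonneg R} := NngNum t_ge0.

Let conv := measure_add (mscale one_minus_t P) (mscale t_nneg Q).

HB.instance Definition _ := Measure.on conv.

Let convE A : conv A = ((1 - t)%:E * P A + t%:E * Q A)%E.
Proof. by rewrite /conv measure_addE. Qed.

Let conv_setT : conv setT = 1%E.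
Proof. by rewrite convE !probability_setT !mule1 -EFinD subrK. Qed.

HB.instance Definition _ := Measure_isProbability.Build _ _ _ conv conv_setT.

Definition conv_prob : probX X := conv.

Local Open Scope ereal_scope.

Lemma conv_probE A : conv_prob A = (1 - t)%:E * P A + t%:E * Q A.
Proof. exact: convE. Qed.

Lemma ge0_integral_conv_prob (g : borelX X -> \bar R) :
  measurable_fun [set: borelX X] g -> (forall x, 0 <= g x) ->
  \int[conv_prob]_x g x = (1 - t)%:E * \int[P]_x g x + t%:E * \int[Q]_x g x.
Proof.
move=> mg g0.
by rewrite /conv_prob /conv ge0_integral_measure_add // !ge0_integral_mscale.
Qed.

Lemma integral_conv_prob (f : X -> R) : continuous f ->
  \int[conv_prob]_x (f x)%:E = ((1 - t) * fine (\int[P]_x (f x)%:E)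
                                + t * fine (\int[Q]_x (f x)%:E))%:E.
Proof.
move=> cf.
have iP := continuous_integrable P cf; have iQ := continuous_integrable Q cf.
have mf : measurable_fun [set: borelX X] (EFin \o f).
  by apply/measurable_EFinP; exact: continuous_measurable_borel.
rewrite integralE (integralE P) (integralE Q).
rewrite (ge0_integral_conv_prob (measurable_funepos mf)) //.
rewrite (ge0_integral_conv_prob (measurable_funeneg mf)) //.
move: (integrable_pos_fin_num measurableT iP) (integrable_neg_fin_num measurableT iP).
move: (integrable_pos_fin_num measurableT iQ) (integrable_neg_fin_num measurableT iQ).
move=> /fineK <- /fineK <- /fineK <- /fineK <-.
by rewrite -!EFinM -!EFinD /=; congr EFin; ring.
Qed.

Lemma integral_conv_probB (f : X -> R) : continuous f ->
  \int[conv_prob]_x (f x)%:E - \int[P]_x (f x)%:E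
    = (t * (fine (\int[Q]_x (f x)%:E) - fine (\int[P]_x (f x)%:E)))%:E.
Proof.
move=> cf; rewrite integral_conv_prob // -(fineK (integral_continuous_fin_num P cf)).
by rewrite -EFinB /=; congr EFin; ring.
Qed.

Lemma outer_conv_prob S : (1 - t)%:E * outer P S + t%:E * outer Q S <= outer conv_prob S.
Proof.
have t'_ge0 : 0 <= (1 - t)%:E by rewrite lee_fin subr_ge0.
apply: le_ereal_inf_tmp => _ [C [mC SC] <-].
rewrite conv_probE; apply: leeD; apply: lee_wpmul2l => //;
  by apply: ereal_inf_lbound; exists C.
Qed.

Lemma conv_prob_invariant (F : X -> set X) :
  F_invariant F P -> F_invariant F Q -> F_invariant F conv_prob.
Proof.
move=> invP invQ B mB; apply: le_trans (outer_conv_prob _).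
rewrite conv_probE; apply: leeD; apply: lee_wpmul2l; rewrite ?lee_fin ?subr_ge0 //.
- exact: invP.
- exact: invQ.
Qed.

Lemma conv_prob_full_support : (0 < t)%R -> full_support Q -> full_support conv_prob.
Proof.
move=> t_gt0 fullQ U oU U0; rewrite conv_probE.
by rewrite lte_paddl ?mule_ge0 ?lee_fin ?subr_ge0 // mule_gt0 ?lte_fin // fullQ.
Qed.

End convex_combination.

End borel_integrals.

Section metric_bumps.
Context {R : realType} (X : metricType R).

Lemma lipschitz1_continuous (f : X -> R) :
  (forall x y, `|f x - f y| <= mdist x y) -> continuous f.
Proof.
move=> f_lip x; apply/cvgrPdist_lt => e e_gt0.
have : nbhs x (ball x e) by exact: nbhsx_ballx.
apply: filterS => y; rewrite ballEmdist /= => xy_lt_e.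
exact: le_lt_trans (f_lip x y) xy_lt_e.
Qed.

Lemma ler_dist_max0 (a b : R) : `|Order.max a 0 - Order.max b 0| <= `|a - b|.
Proof.
case: (leP a 0) => a0; case: (leP b 0) => b0.
- by rewrite subrr normr0.
- by rewrite sub0r normrN (gtr0_norm b0) ler_normr; apply/orP; right; lra.
- by rewrite subr0 (gtr0_norm a0) ler_normr; apply/orP; left; lra.
- by [].
Qed.

Definition bump (c : X) (r : R) (x : X) : R := Order.max (r - mdist c x) 0.

Lemma bump_continuous c r : continuous (bump c r).
Proof.
apply: lipschitz1_continuous => x y; apply: le_trans (ler_dist_max0 _ _) _.
have cxy := metric_triangle c x y; have cyx := metric_triangle c y x.
have xy := metric_sym x y.
rewrite (_ : _ - _ = mdist c y - mdist c x); last by ring.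
by rewrite ler_norml; apply/andP; split; lra.
Qed.

Lemma bump_ge0 c r x : 0 <= bump c r x.
Proof. by rewrite /bump le_max lexx orbT. Qed.

Lemma ball_bumpE (c : X) (r : R) : ball c r = [set x | 0 < bump c r x].
Proof.
rewrite ballEmdist; apply/seteqP; split => x /=;
  by rewrite /bump lt_max ltxx orbF subr_gt0.
Qed.

Lemma metric_ball_open (c : X) (r : R) : open (ball c r).
Proof.
rewrite ball_bumpE; apply: (continuousP _).1 (@bump_continuous c r) [set z | 0 < z] _.
exact: open_gt.
Qed.

End metric_bumps.

Section full_support_measures.
Context {R : realType} (X : pmetricType R).
Hypothesis compactX : compact [set: X].

Lemma integral_bump_gt0 (mu : probX X) (c : X) (r : R) :
  (0 < \int[mu]_x (bump c r x)%:E)%E <-> (0 < mu (ball c r))%E.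
Proof.
rewrite ball_bumpE; apply: integral_gt0_measure_gt0; last exact: bump_ge0.
by apply: continuous_measurable_borel; exact: bump_continuous.
Qed.

Lemma weak_open_integral_gt0 (f : X -> R) : continuous f ->
  weak_open [set nu : probX X | (0 < \int[nu]_x (f x)%:E)%E].
Proof.
move=> cf mu /=.
have muE := fineK (integral_continuous_fin_num compactX mu cf).
rewrite -muE lte_fin => int_gt0.
exists 1%N, (fun=> f), (fine (\int[mu]_x (f x)%:E)); split => // nu /(_ ord0).
rewrite /= -muE -(fineK (integral_continuous_fin_num compactX nu cf)) -EFinB /=.
by rewrite !lte_fin ltr_norml => /andP[? ?]; lra.
Qed.

Lemma compact_finite_net (e : R) : 0 < e ->
  exists s : seq X, forall x, exists2 c, c \in s & mdist c x < e.
Proof.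
move: compactX; rewrite compact_cover => cover_finite e_gt0.
have [x _|x _|D _ Dcover] := cover_finite X [set: X] (fun c => ball c e).
- exact: metric_ball_open.
- by exists x => //; exact: ballxx.
exists (finmap.enum_fset D) => x; have [c Dc] := Dcover x I.
by rewrite ballEmdist; exists c.
Qed.

Lemma countable_ball_base : exists (c : nat -> X) (r : nat -> R),
  (forall k, 0 < r k) /\
  forall V : set X, open V -> V !=set0 -> exists k, ball (c k) (r k) `<=` V.
Proof.
have net n : exists s : seq X, forall x, exists2 c, c \in s & mdist c x < n.+1%:R^-1.
  by apply: compact_finite_net; rewrite invr_gt0.
have [s s_net] := choice net.
(* [k] codes a pair [(n, i)]: the ball of radius [1/(n+1)] about the [i]-th point of the net [s n]. *)
pose c k := if @unpickle (nat * nat)%type k is Some (n, i) then nth point (s n) i else point.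
pose r k := if @unpickle (nat * nat)%type k is Some (n, _) then n.+1%:R^-1 else 1 : R.
exists c, r; split => [k|V oV [x Vx]].
  by rewrite /r; case: unpickle => [[n _]|] //; rewrite invr_gt0.
have [e e_gt0 xe_V] : exists2 e, 0 < e & ball x e `<=` V.
  by move: oV; rewrite openE => /(_ x Vx) /nbhs_ballP [e /= ? ?]; exists e.
pose n := Num.truncn (2 / e).
have two_r_lt_e : 2 * n.+1%:R^-1 < e.
  have := Num.Theory.truncnS_gt (2 / e); rewrite -/n ltr_pdivrMr // => ?.
  by rewrite ltr_pdivrMr ?ltr0n // mulrC.
have [y yn xy] := s_net n x.
exists (pickle (n, index y (s n))); rewrite /c /r pickleK nth_index //.
move=> z; rewrite ballEmdist /= => yz; apply: xe_V; rewrite ballEmdist /=.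
move: two_r_lt_e xy yz; set q := n.+1%:R^-1.
have := metric_triangle x y z; have := metric_sym x y; lra.
Qed.

Lemma full_support_Gdelta : exists U : nat -> set (probX X),
  (forall k, weak_open (U k)) /\ [set mu | full_support mu] = \bigcap_k U k.
Proof.
have [c [r [r_gt0 base]]] := countable_ball_base.
exists (fun k => [set nu : probX X | (0 < \int[nu]_x (bump (c k) (r k) x)%:E)%E]).
split => [k|]; first by apply: weak_open_integral_gt0; exact: bump_continuous.
have ball_measurable k : measurable (ball (c k) (r k) : set (borelX X)).
  by apply: open_measurable_borel; exact: metric_ball_open.
apply/seteqP; split => mu /=.
- move=> full k _; apply/integral_bump_gt0/full; first exact: metric_ball_open.
  by exists (c k); exact: ballxx.
- move=> pos V oV V0; have [k ckV] := base V oV V0.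
  have /integral_bump_gt0 ball_gt0 := pos k I.
  apply: lt_le_trans ball_gt0 _; apply: le_measure; rewrite ?inE //.
  exact: open_measurable_borel.
Qed.

Lemma dense_full_support_invariant (F : X -> set X) (mu0 : probX X) :
  F_invariant F mu0 -> full_support mu0 ->
  dense_in [set mu : probX X | F_invariant F mu]
           [set mu | F_invariant F mu /\ full_support mu].
Proof.
move=> inv0 full0; split => [mu [] //|V wV [nu [Vnu inv_nu]]].
have [n [f [e [e_gt0 cf nbhs_V]]]] := wV nu Vnu.
pose K := \sum_(i < n) `|fine (\int[mu0]_x (f i x)%:E) - fine (\int[nu]_x (f i x)%:E)|.
have K_ge0 : 0 <= K by rewrite sumr_ge0.
pose t := e / (K + e).
have Ke_gt0 : 0 < K + e by lra.
have t_gt0 : 0 < t by rewrite divr_gt0.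
have t_le1 : t <= 1 by rewrite ler_pdivrMr // mul1r lerDr.
have tK_lt_e : t * K < e.
  have : t * (K + e) = e by rewrite /t mulrVK ?unitfE ?gt_eqF.
  have : 0 < t * e by rewrite mulr_gt0.
  rewrite mulrDr; lra.
exists (conv_prob (ltW t_gt0) t_le1 nu mu0); split; last first.
  by split; [exact: conv_prob_invariant | exact: conv_prob_full_support].
apply: nbhs_V => i; rewrite integral_conv_probB // lte_fin normrM (gtr0_norm t_gt0).
apply: le_lt_trans tK_lt_e; rewrite ler_wpM2l ?(ltW t_gt0) //.
by rewrite /K (bigD1 i) //= lerDl sumr_ge0.
Qed.

End full_support_measures.

Theorem theorem13 (R : realType) (X : pmetricType R) (F : X -> set X) :
  compact [set: X] -> set_valued_mapping F ->
  let M := [set mu : probX X | F_invariant F mu] in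
  let A := [set mu : probX X | F_invariant F mu /\ full_support mu] in
  A = set0 \/ (Gdelta_in M A /\ dense_in M A).
Proof.
move=> compactX _ M A.
have [[mu0 [inv0 full0]]|A0] := pselect (exists mu, A mu); last first.
  by left; apply/seteqP; split => // mu Amu; apply: A0; exists mu.
right; split; last exact: (dense_full_support_invariant compactX inv0 full0).
have [U [U_open fullE]] := full_support_Gdelta compactX.
exists U; split => //; rewrite -fullE.
by apply/seteqP; split => mu [].
Qed.
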